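(* Consider the single-round multidimensional procurement auction described in the context. If every player reports its true type, i.e. $(c'_i,s'_i)=(c_i,s_i)$ for all $i$, then every player's utility is nonnegative: $u_i\ge 0$ for all $i$ (individual rationality, $p_i-c_i\ge 0$).
   Context: A distributor allocates tasks to $n$ players (mobile devices). Each player $i$ has a private type $(c_i,s_i)$, where $s_i>0$ is its actual service quotient (amount of data it processes per second) and $c_i>0$ is its actual cost of performing the task. Each player $i$ submits a bid $(c'_i,s'_i)$. Allocation: the distributor computes weights $w_i=s'_i/c'_i$ from the reported bids, orders players by decreasing weight (relabel so that player $1$ has the largest weight, etc.), and selects the largest number $k$ of top-ranked players $\{1,\dots,k\}$ for which the budget constraint $\sum_{i} p_i/s_i\le B$ holds for a given budget $B>0$ (there is a player ranked $k+1$). Write $c_{k+1},s_{k+1}$ for the reported cost and service quotient of the player ranked $k+1$. Payment: players ranked $i>k$ receive $p_i=0$; a selected player $i\le k$ receives $p_i=p^1_i+p^2_i$ with $p^1_i=s'_i\,c_{k+1}/s_{k+1}$ and $p^2_i=d(s_i,s'_i)(s_i-s'_i)$, where $s_i$ is the actual service quotient observed after task completion and $d(s_i,s'_i)=0$ if $s_i\ge s'_i$, $d(s_i,s'_i)=(s'_i-s_i)^2+c_{k+1}/s_{k+1}$ if $s_i<s'_i$. The utility of player $i$ is $u_i=p_i-c_i$ if selected and $0$ otherwise. *)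

From mathcomp Require Import all_boot all_order all_algebra.
Set Implicit Arguments. Unset Strict Implicit. Unset Printing Implicit Defensive.
Import Order.TTheory GRing.Theory Num.Theory.
Local Open Scope ring_scope.

Section Auction.
Variables (R : realFieldType) (n : nat).

(* A ranking sigma : 'I_n -> 'I_n maps a 0-indexed rank j to the player at
   that rank (rank 0 = largest weight).  k : 'I_n is the number of selected
   players (ranks 0..k-1); the player at rank k is "player k+1" of the paper. *)

Definition weight (c' s' : 'I_n -> R) (i : 'I_n) : R := s' i / c' i.

Definition is_ranking (c' s' : 'I_n -> R) (sigma : 'I_n -> 'I_n) : Prop :=
  injective sigma /\
  (forall j1 j2 : 'I_n, (j1 <= j2)%N -> weight c' s' (sigma j2) <= weight c' s' (sigma j1)).

Definition thr (c' s' : 'I_n -> R) (sigma : 'I_n -> 'I_n) (k : 'I_n) : R :=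
  c' (sigma k) / s' (sigma k).

Definition dpen (sa sr r : R) : R :=
  if sr <= sa then 0 else (sr - sa) ^+ 2 + r.

Definition pay_sel (s c' s' : 'I_n -> R) (sigma : 'I_n -> 'I_n) (k : 'I_n)
  (i : 'I_n) : R :=
  let r := thr c' s' sigma k in
  s' i * r + dpen (s i) (s' i) r * (s i - s' i).

Definition selected (sigma : 'I_n -> 'I_n) (k : 'I_n) (i : 'I_n) : bool :=
  [exists j : 'I_n, (j < k)%N && (sigma j == i)].

Definition payment (s c' s' : 'I_n -> R) (sigma : 'I_n -> 'I_n) (k : 'I_n)
  (i : 'I_n) : R :=
  if selected sigma k i then pay_sel s c' s' sigma k i else 0.

Definition budget_ok (s c' s' : 'I_n -> R) (B : R) (sigma : 'I_n -> 'I_n)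
  (k : 'I_n) : Prop :=
  \sum_(i : 'I_n) payment s c' s' sigma k i / s i <= B.

(* k is the largest number of top-ranked players satisfying the budget,
   with a player ranked k+1 existing (k < n) *)
Definition is_selection (s c' s' : 'I_n -> R) (B : R) (sigma : 'I_n -> 'I_n)
  (k : 'I_n) : Prop :=
  budget_ok s c' s' B sigma k /\
  (forall k' : 'I_n, (k < k')%N -> ~ budget_ok s c' s' B sigma k').

Definition utility (c s c' s' : 'I_n -> R) (sigma : 'I_n -> 'I_n) (k : 'I_n)
  (i : 'I_n) : R :=
  if selected sigma k i then payment s c' s' sigma k i - c i else 0.

End Auction.

(* Under truthful bids the penalty term of the payment vanishes, so a selected
   player receives its service quotient times the threshold price c_{k+1}/s_{k+1}
   of the first rejected player.  Being ranked above that player means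
   s_i/c_i >= s_{k+1}/c_{k+1}, which is exactly c_i <= s_i c_{k+1}/s_{k+1}. *)

From mathcomp Require Import all_boot all_order all_algebra.
Import Order.TTheory GRing.Theory Num.Theory.
Local Open Scope ring_scope.

Lemma dpen_id (R : realFieldType) (x r : R) : dpen x x r = 0.
Proof. by rewrite /dpen lexx. Qed.

Lemma pay_sel_truthful (R : realFieldType) (n : nat) (c s : 'I_n -> R)
    (sigma : 'I_n -> 'I_n) (k i : 'I_n) :
  pay_sel s c s sigma k i = s i * thr c s sigma k.
Proof. by rewrite /pay_sel dpen_id mul0r addr0. Qed.

Lemma selected_weight_ge (R : realFieldType) (n : nat) (c s : 'I_n -> R)
    (sigma : 'I_n -> 'I_n) (k i : 'I_n) :
  is_ranking c s sigma -> selected sigma k i ->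
  weight c s (sigma k) <= weight c s i.
Proof.
move=> [_ ranked] /existsP [j /andP [ltjk /eqP <-]].
exact: ranked (ltnW ltjk).
Qed.

Lemma cost_le_threshold_price (R : realFieldType) (ci si cj sj : R) :
  0 < ci -> 0 < si -> 0 < cj -> 0 < sj ->
  sj / cj <= si / ci -> ci <= si * (cj / sj).
Proof.
move=> ci_gt0 si_gt0 cj_gt0 sj_gt0.
rewrite ler_pdivlMr // mulrAC ler_pdivrMr // => le_w.
by rewrite mulrA ler_pdivlMr // mulrC.
Qed.

Theorem lemma4 (R : realFieldType) (n : nat) (c s : 'I_n -> R) (B : R)
  (sigma : 'I_n -> 'I_n) (k : 'I_n) :
  (forall i, 0 < c i) -> (forall i, 0 < s i) -> 0 < B ->
  is_ranking c s sigma ->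
  is_selection s c s B sigma k ->
  forall i : 'I_n, 0 <= utility c s c s sigma k i.
Proof.
move=> c_gt0 s_gt0 _ ranking _ i.
rewrite /utility /payment.
have [sel_i|//] := boolP (selected sigma k i).
rewrite pay_sel_truthful subr_ge0.
apply: cost_le_threshold_price => //.
exact: selected_weight_ge ranking sel_i.
Qed.
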